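(* Let $w$ be a word over $\{L,R\}$ and suppose $w$ forces the word $u$. Then $u\in\mathcal{L}_w$.
   Context: An interval map is a continuous map $f\colon I\to I$ on a compact interval $I=[a,b]$, $a<b$. Words are finite strings (including the empty word) over $\{L,R\}$; $|w|$ is the length. For $x\in I$ put $x_1=x$, $x_{j+1}=f(x_j)$. If $x$ is eventually fixed, let $n\ge 0$ be least such that $x_{n+1}$ is a fixed point of $f$; the orbit pattern tag of $x$ is the word of length $n$ whose $j$-th letter ($1\le j\le n$) is $L$ if $x_{j+1}<x_j$ and $R$ if $x_{j+1}>x_j$ (a fixed point has the empty word as tag). The map $f$ admits the tag $w$ if some point of $I$ has orbit pattern tag $w$. A word $w$ forces a word $u$ if every interval map admitting the tag $w$ also admits the tag $u$. A tail of $w$ is any word $v'$ with $w=vv'$ for some word $v$. For a set $\mathcal{S}$ of words, $\mathcal{S}^L$ (resp. $\mathcal{S}^R$) is the set of words in $\mathcal{S}$ starting with $L$ (resp. $R$), and $L(\mathcal{S})=\{Ls: s\in\mathcal{S}\}$, $R(\mathcal{S})=\{Rs:s\in\mathcal{S}\}$. The language $\mathcal{L}_w$ is defined recursively: if $|w|\le 2$, $\mathcal{L}_w$ is the set of tails of $w$; if $|w|>2$, then $\mathcal{L}_w=\mathcal{L}_{Rw'}\cup L(\mathcal{L}^R_{Rw'})$ when $w=LRw'$; $\mathcal{L}_w=\mathcal{L}_{LLw'}\cup L(\mathcal{L}^L_{LLw'})$ when $w=LLLw'$; $\mathcal{L}_w=\mathcal{L}_{LRw'}\cup L(\mathcal{L}_{LRw'})$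 when $w=LLRw'$; and dually (interchanging the letters $L$ and $R$ everywhere) when $w$ starts with $R$. *)

From Stdlib Require Import Reals List.
Import ListNotations.
Open Scope R_scope.

Inductive letter : Set := DL | DR.
Definition word := list letter.

Fixpoint iterf (f : R -> R) (n : nat) (x : R) : R :=
  match n with O => x | S k => f (iterf f k x) end.

Definition is_fixed (f : R -> R) (y : R) : Prop := f y = y.

Definition continuous_on_I (a b : R) (f : R -> R) : Prop :=
  forall x, a <= x <= b ->
  forall eps, 0 < eps -> exists delta, 0 < delta /\
    forall y, a <= y <= b -> Rabs (y - x) < delta -> Rabs (f y - f x) < eps.

Definition interval_map (a b : R) (f : R -> R) : Prop :=
  a < b /\ (forall x, a <= x <= b -> a <= f x <= b) /\ continuous_on_I a b f.

(* x has orbit pattern tag w: with x_1 = x, x_{j+1} = f x_j, n = |w| is the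
   least n with x_{n+1} fixed, and the j-th letter records whether
   x_{j+1} < x_j (L) or x_{j+1} > x_j (R).  Indices shifted to start at 0:
   x_{j+1} = iterf f j x. *)
Definition has_tag (f : R -> R) (x : R) (w : word) : Prop :=
  is_fixed f (iterf f (length w) x) /\
  (forall m, (m < length w)%nat -> ~ is_fixed f (iterf f m x)) /\
  (forall j, (j < length w)%nat ->
     (nth j w DL = DL /\ iterf f (S j) x < iterf f j x) \/
     (nth j w DL = DR /\ iterf f (S j) x > iterf f j x)).

Definition admits (a b : R) (f : R -> R) (w : word) : Prop :=
  exists x, a <= x <= b /\ has_tag f x w.

Definition forces (w u : word) : Prop :=
  forall (a b : R) (f : R -> R), interval_map a b f -> admits a b f w -> admits a b f u.

Fixpoint tails (w : word) : list word :=
  w :: match w with [] => [] | _ :: t => tails t end.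

Definition starting_with (c : letter) (S : list word) : list word :=
  filter (fun s => match s with
                   | DL :: _ => match c with DL => true | DR => false end
                   | DR :: _ => match c with DL => false | DR => true end
                   | [] => false end) S.

Definition prefix_all (c : letter) (S : list word) : list word := map (cons c) S.

Fixpoint Lang (w : word) : list word :=
  match w with
  | [] => tails w
  | a :: t =>
    match t with
    | [] | [_] => tails w
    | b :: c :: _ =>
      match a, b, c with
      | DL, DR, _  => Lang t ++ prefix_all DL (starting_with DR (Lang t))
      | DL, DL, DL => Lang t ++ prefix_all DL (starting_with DL (Lang t))
      | DL, DL, DR => Lang t ++ prefix_all DL (Lang t)
      | DR, DL, _  => Lang t ++ prefix_all DR (starting_with DL (Lang t))
      | DR, DR, DR => Lang t ++ prefix_all DR (starting_with DR (Lang t))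
      | DR, DR, DL => Lang t ++ prefix_all DR (Lang t)
      end
    end
  end.

(* For every word w we construct a Lipschitz map g on an interval [a, b] with
   a <= 0 <= b, moving every point y <> 0 in the direction of its only fixed
   point 0, in which the endpoint b (if w starts with L) or a (if w starts
   with R) has tag w, and all of whose tags lie in L_w.  Since w forces u,
   this map admits u, hence u is in L_w.

   The map for L t is obtained from the map for t by attaching over [b, b+1]
   the segment from (b, g b) to (b+1, x), x the start point of t.  The new
   tags are the words L s with s the tag of a point v between g b and x.  A
   case analysis on the first two letters of t shows that either L s is
   permitted by the recursive rule for L_{Lt}, or v >= 0 > x, and then the
   intermediate value theorem gives a point of (0, b] with tag L s, so that
   L s is already in L_t.  The map for R t is the conjugate by y |-> -y of the
   map for L (mirror t).  The empty word is handled by the identity map, which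
   only has the empty tag. *)

From Stdlib Require Import Reals List Lra Lia.
Import ListNotations.
Open Scope R_scope.

Definition opp_letter (c : letter) : letter :=
  match c with DL => DR | DR => DL end.

Definition mirror (w : word) : word := map opp_letter w.

Lemma mirror_involutive (w : word) : mirror (mirror w) = w.
Proof. induction w as [|[] w IH]; simpl; f_equal; exact IH. Qed.

Lemma in_starting_with c S s :
  In s (starting_with c S) <-> In s S /\ hd_error s = Some c.
Proof.
  unfold starting_with. rewrite filter_In.
  destruct s as [|[] s], c; simpl; intuition congruence.
Qed.

Lemma starting_with_mirror c S :
  starting_with c (map mirror S) = map mirror (starting_with (opp_letter c) S).
Proof.
  induction S as [|[|[] s] S IH]; destruct c; simpl; rewrite ?IH; reflexivity.
Qed.

Definition prefixable (c d e : letter) (S : list word) : list word :=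
  match c, d, e with
  | DL, DR, _ | DR, DL, _ => starting_with d S
  | DL, DL, DL | DR, DR, DR => starting_with c S
  | _, _, _ => S
  end.

Lemma Lang_cons3 c d e r :
  Lang (c :: d :: e :: r) =
  Lang (d :: e :: r) ++ prefix_all c (prefixable c d e (Lang (d :: e :: r))).
Proof. destruct c, d, e; reflexivity. Qed.

Lemma prefix_all_mirror c S :
  map mirror (prefix_all c S) = prefix_all (opp_letter c) (map mirror S).
Proof. unfold prefix_all. rewrite !map_map. reflexivity. Qed.

Lemma prefixable_mirror c d e S :
  prefixable (opp_letter c) (opp_letter d) (opp_letter e) (map mirror S) =
  map mirror (prefixable c d e S).
Proof. destruct c, d, e; simpl; rewrite ?starting_with_mirror; reflexivity. Qed.

Lemma Lang_mirror w : Lang (mirror w) = map mirror (Lang w).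
Proof.
  induction w as [|c t IH]; [reflexivity|].
  destruct t as [|d [|e r]]; [destruct c; reflexivity|destruct c, d; reflexivity|].
  change (mirror (c :: d :: e :: r))
    with (opp_letter c :: opp_letter d :: opp_letter e :: mirror r).
  rewrite !Lang_cons3.
  change (opp_letter d :: opp_letter e :: mirror r) with (mirror (d :: e :: r)).
  rewrite IH, map_app, prefix_all_mirror, <- prefixable_mirror. reflexivity.
Qed.

Lemma Lang_cons_incl c t s : In s (Lang t) -> In s (Lang (c :: t)).
Proof.
  destruct t as [|d [|e r]]; intros H.
  - destruct c; simpl in *; tauto.
  - destruct c, d; simpl in *; tauto.
  - rewrite Lang_cons3. apply in_or_app. now left.
Qed.

Lemma in_Lang_cons_DL t s : In s (Lang t) ->
  (hd_error t = Some DR -> hd_error s = Some DR) ->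
  (hd_error t = Some DL -> hd_error (tl t) <> Some DR -> hd_error s = Some DL) ->
  In (DL :: s) (Lang (DL :: t)).
Proof.
  intros Hs HR HL. destruct t as [|d [|e r]].
  - destruct Hs as [<-|[]]. now left.
  - destruct Hs as [<-|[<-|[]]]; [destruct d; simpl; auto|].
    destruct d; [discriminate (HL eq_refl ltac:(discriminate)) | discriminate (HR eq_refl)].
  - rewrite Lang_cons3. apply in_or_app. right. apply in_map.
    destruct d, e; simpl in *; rewrite ?in_starting_with; auto; split; auto.
    apply HL; congruence.
Qed.

Definition moves (c : letter) (y y' : R) : Prop :=
  match c with DL => y' < y | DR => y < y' end.

Lemma iterf_succ_r f n z : iterf f (S n) z = iterf f n (f z).
Proof. induction n as [|n IH]; simpl; [reflexivity|]. now rewrite <- IH. Qed.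

Lemma has_tag_nil_iff f z : has_tag f z [] <-> f z = z.
Proof.
  split; [now intros []|]. intros Hz. repeat split; simpl; [exact Hz| |]; intros; lia.
Qed.

Lemma has_tag_cons_iff f z c s :
  has_tag f z (c :: s) <-> moves c z (f z) /\ has_tag f (f z) s.
Proof.
  unfold has_tag; simpl length. split.
  - intros [Hfix [Hmove Hdir]]. split; [|split; [|split]].
    + destruct (Hdir 0%nat ltac:(lia)) as [[Hc ?]|[Hc ?]]; simpl in *; subst c; simpl; lra.
    + now rewrite <- iterf_succ_r.
    + intros m Hm. rewrite <- iterf_succ_r. apply Hmove. lia.
    + intros j Hj. rewrite <- !iterf_succ_r. apply (Hdir (S j)). lia.
  - intros [Hc [Hfix [Hmove Hdir]]]. split; [|split].
    + now rewrite iterf_succ_r.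
    + intros [|m] Hm; unfold is_fixed; simpl.
      * destruct c; simpl in Hc; lra.
      * change (~ is_fixed f (iterf f (S m) z)). rewrite iterf_succ_r. apply Hmove. lia.
    + intros [|j] Hj.
      * destruct c; simpl in *; [left|right]; auto.
      * rewrite (iterf_succ_r f (S j) z), (iterf_succ_r f j z). apply Hdir. lia.
Qed.

Lemma has_tag_hd_of_moves f z s c : moves c z (f z) -> has_tag f z s -> hd_error s = Some c.
Proof.
  intros Hc Hs. destruct s as [|d s].
  - apply has_tag_nil_iff in Hs. destruct c; simpl in Hc; lra.
  - apply has_tag_cons_iff in Hs as [Hd _].
    destruct c, d; simpl in *; f_equal; lra.
Qed.

Lemma has_tag_moves_of_hd f z s c : has_tag f z s -> hd_error s = Some c -> moves c z (f z).
Proof.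
  intros Hs Hc. destruct s as [|d s]; [discriminate|].
  injection Hc as ->. now apply has_tag_cons_iff in Hs as [? _].
Qed.

Lemma has_tag_agree f g a b :
  (forall y, a <= y <= b -> f y = g y) ->
  (forall y, a <= y <= b -> a <= g y <= b) ->
  forall s z, a <= z <= b -> has_tag f z s <-> has_tag g z s.
Proof.
  intros Hfg Hg s. induction s as [|c s IH]; intros z Hz.
  - rewrite !has_tag_nil_iff, Hfg by exact Hz. reflexivity.
  - rewrite !has_tag_cons_iff, Hfg, IH by auto. reflexivity.
Qed.

Lemma has_tag_mirror g s z :
  has_tag (fun y => - g (- y)) (- z) (mirror s) <-> has_tag g z s.
Proof.
  revert z. induction s as [|c s IH]; intros z; simpl.
  - rewrite !has_tag_nil_iff, Ropp_involutive. split; intros; lra.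
  - rewrite !has_tag_cons_iff, Ropp_involutive, IH.
    destruct c; simpl; split; intros [? ?]; split; auto; lra.
Qed.

Definition lipschitz (f : R -> R) : Prop :=
  exists K, 0 <= K /\ forall y z, Rabs (f y - f z) <= K * Rabs (y - z).

Lemma lipschitz_continuity f : lipschitz f -> continuity f.
Proof.
  intros [K [HK Hf]] x eps Heps. exists (eps / (K + 1)). split.
  - apply Rdiv_lt_0_compat; lra.
  - intros y [_ Hy]. simpl in *. unfold R_dist in *.
    assert (Heps' : eps = (K + 1) * (eps / (K + 1))) by (field; lra).
    pose proof (Hf y x). pose proof (Rabs_pos (y - x)). nra.
Qed.

Lemma continuity_continuous_on_I a b f : continuity f -> continuous_on_I a b f.
Proof.
  intros Hf x _ eps Heps. destruct (Hf x eps Heps) as [delta [Hdelta Hclose]].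
  exists delta. split; [exact Hdelta|]. intros y _ Hy.
  destruct (Req_dec y x) as [->|Hyx].
  - rewrite Rminus_diag, Rabs_R0. exact Heps.
  - apply (Hclose y). split; [split; [exact I|congruence]|exact Hy].
Qed.

Lemma IVT_le f y z v : continuity f -> y <= z -> f y <= v <= f z ->
  exists c, y <= c <= z /\ f c = v.
Proof.
  intros Hf Hyz Hv.
  assert (Hfv : continuity (fun c => f c - v)).
  { apply (continuity_minus f (fct_cte v) Hf). now apply continuity_const. }
  destruct (IVT_cor _ y z Hfv Hyz) as [c [Hc Hfc]]; [nra|].
  exists c. split; [exact Hc|lra].
Qed.

Lemma convex_between a b u x l :
  a <= u <= b -> a <= x <= b -> 0 <= l <= 1 -> a <= u + (x - u) * l <= b.
Proof. intros. split; nra. Qed.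

Definition extend_right (g : R -> R) (b x : R) (y : R) : R :=
  g (Rmin y b) + (x - g b) * (Rmax y b - b).

Lemma extend_right_old g b x y : y <= b -> extend_right g b x y = g y.
Proof.
  intros Hy. unfold extend_right. rewrite Rmin_left, Rmax_right by exact Hy. ring.
Qed.

Lemma extend_right_new g b x y : b <= y -> extend_right g b x y = g b + (x - g b) * (y - b).
Proof. intros Hy. unfold extend_right. rewrite Rmin_right, Rmax_left by exact Hy. reflexivity. Qed.

Lemma extend_right_maps_to g a b x :
  (forall y, a <= y <= b -> a <= g y <= b) -> a <= b -> a <= x <= b ->
  forall y, a <= y <= b + 1 -> a <= extend_right g b x y <= b.
Proof.
  intros Hg Hab Hx y Hy. destruct (Rle_dec y b).
  - rewrite extend_right_old by lra. apply Hg. lra.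
  - rewrite extend_right_new by lra. apply convex_between; [apply Hg| |]; lra.
Qed.

Lemma lipschitz_extend_right g b x : lipschitz g -> lipschitz (extend_right g b x).
Proof.
  intros [K [HK Hg]]. exists (K + Rabs (x - g b)). split; [pose proof (Rabs_pos (x - g b)); lra|].
  intros y z. unfold extend_right.
  assert (Hmin : Rabs (Rmin y b - Rmin z b) <= Rabs (y - z))
    by (unfold Rmin, Rabs; repeat destruct Rle_dec; repeat destruct Rcase_abs; lra).
  assert (Hmax : Rabs (Rmax y b - b - (Rmax z b - b)) <= Rabs (y - z))
    by (unfold Rmax, Rabs; repeat destruct Rle_dec; repeat destruct Rcase_abs; lra).
  pose proof (Hg (Rmin y b) (Rmin z b)). pose proof (Rabs_pos (x - g b)).
  replace (g (Rmin y b) + (x - g b) * (Rmax y b - b)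
           - (g (Rmin z b) + (x - g b) * (Rmax z b - b)))
    with ((g (Rmin y b) - g (Rmin z b)) + (x - g b) * (Rmax y b - b - (Rmax z b - b)))
    by ring.
  eapply Rle_trans; [apply Rabs_triang|]. rewrite Rabs_mult. nra.
Qed.

Lemma lipschitz_mirror g : lipschitz g -> lipschitz (fun y => - g (- y)).
Proof.
  intros [K [HK Hg]]. exists K. split; [exact HK|]. intros y z.
  rewrite <- Rabs_Ropp, Ropp_minus_distr, <- (Rabs_Ropp (y - z)), Ropp_minus_distr.
  replace (- g (- z) - - g (- y)) with (g (- y) - g (- z)) by ring.
  replace (z - y) with (- y - - z) by ring. apply Hg.
Qed.

Definition start_point (w : word) (a b : R) : R :=
  match w with DL :: _ => b | DR :: _ => a | [] => 0 end.

Lemma start_point_DL w a b : hd_error w = Some DL -> start_point w a b = b.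
Proof. destruct w as [|[] w]; simpl; congruence. Qed.

Lemma start_point_DR w a b : hd_error w = Some DR -> start_point w a b = a.
Proof. destruct w as [|[] w]; simpl; congruence. Qed.

Lemma start_point_mirror w a b : start_point (mirror w) (- b) (- a) = - start_point w a b.
Proof. destruct w as [|[] w]; simpl; ring. Qed.

Record realizer (w : word) (a b : R) (g : R -> R) : Prop := {
  realizer_bounds : a <= 0 <= b;
  realizer_maps_to : forall y, a <= y <= b -> a <= g y <= b;
  realizer_toward_zero : forall y, a <= y <= b -> (y < 0 -> y < g y) /\ (0 < y -> g y < y);
  realizer_zero : g 0 = 0;
  realizer_lipschitz : lipschitz g;
  realizer_tag : has_tag g (start_point w a b) w;
  (* Both endpoints are eventually fixed; this is what produces zeros of g in
     (0, b] in [realizer_nonpos_image]. *)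
  realizer_left_end : exists s, has_tag g a s;
  realizer_right_end : exists s, has_tag g b s;
  realizer_tags : forall y s, a <= y <= b -> has_tag g y s -> In s (Lang w)
}.

Arguments realizer_bounds {w a b g}.
Arguments realizer_maps_to {w a b g}.
Arguments realizer_toward_zero {w a b g}.
Arguments realizer_zero {w a b g}.
Arguments realizer_lipschitz {w a b g}.
Arguments realizer_tag {w a b g}.
Arguments realizer_left_end {w a b g}.
Arguments realizer_right_end {w a b g}.
Arguments realizer_tags {w a b g}.

Section Realizer.

Context {t : word} {a b : R} {g : R -> R} (Hg : realizer t a b g).

Lemma start_point_between : a <= start_point t a b <= b.
Proof. destruct Hg. destruct t as [|[] ?]; simpl; lra. Qed.

Lemma realizer_moves_left_pos y : a <= y <= b -> g y < y -> 0 < y.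
Proof.
  intros Hy Hgy. destruct (realizer_toward_zero Hg y Hy) as [Hneg _].
  destruct (Rtotal_order y 0) as [Hy0|[->|Hy0]]; [specialize (Hneg Hy0); lra| |lra].
  rewrite (realizer_zero Hg) in Hgy. lra.
Qed.

Lemma realizer_moves_right_neg y : a <= y <= b -> y < g y -> y < 0.
Proof.
  intros Hy Hgy. destruct (realizer_toward_zero Hg y Hy) as [_ Hpos].
  destruct (Rtotal_order y 0) as [Hy0|[->|Hy0]]; [lra| |specialize (Hpos Hy0); lra].
  rewrite (realizer_zero Hg) in Hgy. lra.
Qed.

Lemma realizer_fixed_point y : a <= y <= b -> g y = y -> y = 0.
Proof.
  intros Hy Hgy. destruct (realizer_toward_zero Hg y Hy) as [Hneg Hpos].
  destruct (Rtotal_order y 0) as [Hy0|[Hy0|Hy0]];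
    [specialize (Hneg Hy0); lra|exact Hy0|specialize (Hpos Hy0); lra].
Qed.

Lemma realizer_nonpos_image : 0 < b -> exists z, 0 < z <= b /\ g z <= 0.
Proof.
  intros Hb. pose proof (realizer_bounds Hg).
  assert (Horbit : forall s y, 0 < y <= b -> has_tag g y s -> exists z, 0 < z <= b /\ g z <= 0).
  { induction s as [|c s IH]; intros y Hy Hs.
    - apply has_tag_nil_iff in Hs. pose proof (realizer_fixed_point y ltac:(lra) Hs). lra.
    - apply has_tag_cons_iff in Hs as [_ Hs].
      destruct (Rle_lt_dec (g y) 0) as [Hgy|Hgy]; [exists y; split; [exact Hy|exact Hgy]|].
      apply (IH (g y)); [|exact Hs]. pose proof (realizer_maps_to Hg y ltac:(lra)). lra. }
  destruct (realizer_right_end Hg) as [s Hs]. exact (Horbit s b ltac:(lra) Hs).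
Qed.

Lemma realizer_preimage v : 0 <= v < g b -> exists z, 0 < z <= b /\ g z = v.
Proof.
  intros Hv. pose proof (realizer_bounds Hg) as Hab.
  pose proof (realizer_maps_to Hg b ltac:(lra)) as Hgb.
  pose proof (realizer_zero Hg) as Hg0.
  pose proof (lipschitz_continuity _ (realizer_lipschitz Hg)) as Hcont.
  destruct (Rle_lt_or_eq_dec 0 v (proj1 Hv)) as [Hvpos|<-].
  - destruct (IVT_le g 0 b v Hcont) as [z [Hz Hgz]]; [lra|lra|].
    exists z. split; [|exact Hgz]. destruct (Req_dec z 0) as [->|]; lra.
  - destruct realizer_nonpos_image as [z0 [Hz0 Hgz0]]; [lra|].
    destruct (IVT_le g z0 b 0 Hcont) as [z [Hz Hgz]]; [lra|lra|].
    exists z. split; [lra|exact Hgz].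
Qed.

Lemma realizer_right_image_nonneg :
  hd_error t = Some DL -> hd_error (tl t) <> Some DR -> 0 <= g b.
Proof.
  intros Ht Htl. pose proof (realizer_bounds Hg) as Hab.
  pose proof (realizer_maps_to Hg b ltac:(lra)) as Hgb.
  pose proof (realizer_tag Hg) as Htag.
  set (w := t) in Ht, Htl, Htag. clearbody w.
  destruct w as [|c t']; [discriminate|]. injection Ht as ->. simpl in Htag, Htl.
  apply has_tag_cons_iff in Htag as [_ Htag].
  destruct t' as [|[] t''].
  - apply has_tag_nil_iff in Htag. rewrite (realizer_fixed_point (g b) Hgb Htag). lra.
  - apply has_tag_cons_iff in Htag as [Hmove _].
    pose proof (realizer_moves_left_pos (g b) Hgb Hmove). lra.
  - exfalso. now apply Htl.
Qed.

Lemma realizer_segment_tag lam s : 0 < lam <= 1 ->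
  has_tag g (g b + (start_point t a b - g b) * lam) s -> In (DL :: s) (Lang (DL :: t)).
Proof.
  intros Hlam Hs. pose proof (realizer_bounds Hg) as Hab.
  pose proof (realizer_maps_to Hg b ltac:(lra)) as Hgb.
  pose proof start_point_between as Hx.
  pose proof (realizer_tag Hg) as Htag.
  set (x := start_point t a b) in *. remember (g b + (x - g b) * lam) as v eqn:Hvdef.
  assert (Hv : a <= v <= b) by (subst v; apply convex_between; lra).
  destruct (realizer_toward_zero Hg v Hv) as [Hvneg Hvpos].
  assert (HsL : In s (Lang t)) by exact (realizer_tags Hg v s Hv Hs).
  destruct (hd_error t) as [[|]|] eqn:Ht.
  - apply in_Lang_cons_DL; [exact HsL|congruence|intros _ Htl].
    assert (Hxb : x = b) by exact (start_point_DL t a b Ht).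
    pose proof (has_tag_moves_of_hd _ _ _ _ Htag Ht) as Hmove. simpl in Hmove.
    pose proof (realizer_moves_left_pos x Hx Hmove).
    pose proof (realizer_right_image_nonneg Ht Htl).
    apply (has_tag_hd_of_moves g v); simpl; [apply Hvpos|exact Hs]. nra.
  - assert (Hxa : x = a) by exact (start_point_DR t a b Ht).
    pose proof (has_tag_moves_of_hd _ _ _ _ Htag Ht) as Hmove. simpl in Hmove.
    pose proof (realizer_moves_right_neg x Hx Hmove).
    destruct (Rlt_le_dec v 0) as [Hv0|Hv0].
    + apply in_Lang_cons_DL; [exact HsL|intros _|congruence].
      apply (has_tag_hd_of_moves g v); simpl; [apply Hvneg|]; assumption.
    + (* [v] has a preimage in (0, b], whose tag is then [L s]. *)
      apply Lang_cons_incl.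
      destruct (realizer_preimage v) as [z [Hz Hgz]]; [split; [exact Hv0|nra]|].
      apply (realizer_tags Hg z); [lra|].
      apply has_tag_cons_iff. rewrite Hgz. split; [|exact Hs].
      simpl. rewrite <- Hgz. apply (realizer_toward_zero Hg z); lra.
  - apply in_Lang_cons_DL; [exact HsL|congruence|congruence].
Qed.

Lemma realizer_cons_DL : realizer (DL :: t) a (b + 1) (extend_right g b (start_point t a b)).
Proof.
  pose proof (realizer_bounds Hg) as Hab.
  pose proof (realizer_maps_to Hg) as Hmaps.
  pose proof (realizer_maps_to Hg b ltac:(lra)) as Hgb.
  pose proof start_point_between as Hx.
  set (x := start_point t a b) in *. set (f := extend_right g b x).
  assert (Hold : forall y, a <= y <= b -> f y = g y)
    by (intros y Hy; apply extend_right_old; lra).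
  assert (Hnew : forall y, b <= y -> f y = g b + (x - g b) * (y - b))
    by (intros y Hy; apply extend_right_new; lra).
  assert (Hagree : forall s y, a <= y <= b -> has_tag f y s <-> has_tag g y s)
    by exact (has_tag_agree f g a b Hold Hmaps).
  assert (Hfmaps : forall y, a <= y <= b + 1 -> a <= f y <= b)
    by exact (extend_right_maps_to g a b x Hmaps ltac:(lra) Hx).
  assert (Htag : has_tag f (b + 1) (DL :: t)).
  { apply has_tag_cons_iff. rewrite Hnew by lra.
    replace (g b + (x - g b) * (b + 1 - b)) with x by ring.
    split; [simpl; lra|]. apply Hagree; [exact Hx|exact (realizer_tag Hg)]. }
  split.
  - lra.
  - intros y Hy. specialize (Hfmaps y Hy). lra.
  - intros y Hy. destruct (Rle_dec y b).
    + rewrite Hold by lra. apply (realizer_toward_zero Hg). lra.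
    + specialize (Hfmaps y Hy). lra.
  - rewrite Hold by lra. exact (realizer_zero Hg).
  - exact (lipschitz_extend_right g b x (realizer_lipschitz Hg)).
  - exact Htag.
  - destruct (realizer_left_end Hg) as [s Hs]. exists s. apply Hagree; [lra|exact Hs].
  - exists (DL :: t). exact Htag.
  - intros y s Hy Hs. destruct (Rle_dec y b).
    + apply Lang_cons_incl, (realizer_tags Hg y); [lra|]. apply Hagree; [lra|exact Hs].
    + assert (Hmove : moves DL y (f y)) by (specialize (Hfmaps y Hy); simpl; lra).
      pose proof (has_tag_hd_of_moves _ _ _ _ Hmove Hs) as Hhd.
      destruct s as [|c s]; [discriminate|]. injection Hhd as ->.
      apply has_tag_cons_iff in Hs as [_ Hs].
      apply (realizer_segment_tag (y - b)); [lra|].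
      fold x. rewrite <- Hnew by lra. apply Hagree; [apply Hfmaps; lra|exact Hs].
Qed.

Lemma realizer_mirror : realizer (mirror t) (- b) (- a) (fun y => - g (- y)).
Proof.
  pose proof (realizer_bounds Hg) as Hab.
  split.
  - lra.
  - intros y Hy. pose proof (realizer_maps_to Hg (- y)). lra.
  - intros y Hy. pose proof (realizer_toward_zero Hg (- y)). lra.
  - rewrite Ropp_0, (realizer_zero Hg). apply Ropp_0.
  - exact (lipschitz_mirror g (realizer_lipschitz Hg)).
  - rewrite start_point_mirror, has_tag_mirror. exact (realizer_tag Hg).
  - destruct (realizer_right_end Hg) as [s Hs].
    exists (mirror s). now apply has_tag_mirror.
  - destruct (realizer_left_end Hg) as [s Hs].
    exists (mirror s). now apply has_tag_mirror.
  - intros y s Hy Hs.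
    rewrite <- (Ropp_involutive y), <- (mirror_involutive s), has_tag_mirror in Hs.
    rewrite Lang_mirror, <- (mirror_involutive s). apply in_map.
    apply (realizer_tags Hg (- y)); [lra|exact Hs].
Qed.

End Realizer.

Lemma realizer_nil : realizer [] 0 0 (fun _ => 0).
Proof.
  split.
  - lra.
  - intros; lra.
  - intros; lra.
  - reflexivity.
  - exists 0. split; [lra|]. intros y z. rewrite Rminus_diag, Rabs_R0. lra.
  - now apply has_tag_nil_iff.
  - exists []. now apply has_tag_nil_iff.
  - exists []. now apply has_tag_nil_iff.
  - intros y [|c s] Hy Hs; [now left|].
    apply has_tag_cons_iff in Hs as [Hmove _]. destruct c; simpl in Hmove; lra.
Qed.

Lemma realizer_exists w : exists a b g, realizer w a b g.
Proof.
  induction w as [|[] t (a & b & g & Hg)].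
  - exists 0, 0, (fun _ => 0). exact realizer_nil.
  - eexists _, _, _. exact (realizer_cons_DL Hg).
  - rewrite <- (mirror_involutive t).
    eexists _, _, _. exact (realizer_mirror (realizer_cons_DL (realizer_mirror Hg))).
Qed.

Lemma realizer_nondegenerate {c t a b g} (Hg : realizer (c :: t) a b g) : a < b.
Proof.
  pose proof (realizer_bounds Hg).
  pose proof (start_point_between Hg).
  pose proof (realizer_tag Hg) as Htag.
  apply has_tag_cons_iff in Htag as [Hmove _].
  destruct (Req_dec (start_point (c :: t) a b) 0) as [Hx0|]; [|lra].
  rewrite Hx0, (realizer_zero Hg) in Hmove. destruct c; simpl in Hmove; lra.
Qed.

Lemma forces_nil u : forces [] u -> u = [].
Proof.
  intros Hforces.
  destruct (Hforces 0 1 (fun y => y)) as (y & _ & Hu).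
  - repeat split; try lra. apply continuity_continuous_on_I, (derivable_continuous id derivable_id).
  - exists 0. split; [lra|]. now apply has_tag_nil_iff.
  - destruct u as [|c u]; [reflexivity|].
    apply has_tag_cons_iff in Hu as [Hmove _]. destruct c; simpl in Hmove; lra.
Qed.

Theorem mainTheorem5 (w u : word) : forces w u -> In u (Lang w).
Proof.
  intros Hforces. destruct w as [|c t].
  - rewrite (forces_nil u Hforces). now left.
  - destruct (realizer_exists (c :: t)) as (a & b & g & Hg).
    destruct (Hforces a b g) as (y & Hy & Hu).
    + split; [exact (realizer_nondegenerate Hg)|].
      split; [exact (realizer_maps_to Hg)|].
      apply continuity_continuous_on_I, lipschitz_continuity, (realizer_lipschitz Hg).
    + exists (start_point (c :: t) a b).
      split; [exact (start_point_between Hg)|exact (realizer_tag Hg)].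
    + exact (realizer_tags Hg y u Hy Hu).
Qed.
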